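(* Let $K$ be the knot $6_2=K(11,3)$. For every $r\in(0,8)\cap\mathbb{Q}$, the fundamental group $\pi_1(S^3_r(K))$ admits a non-abelian representation into $SL(2,\mathbb{R})$.
   Context: $S^3_r(K)$ denotes Dehn surgery on $K$ with slope $r$. *)

From HB Require Import structures.
From mathcomp Require Import all_boot all_order all_algebra.
From mathcomp Require Import Rstruct.
Set Implicit Arguments. Unset Strict Implicit. Unset Printing Implicit Defensive.
Import Order.TTheory GRing.Theory Num.Theory.
Local Open Scope ring_scope.

(* Schubert/Riley presentation of the group of the two-bridge knot     *)
(* K(p,q) (p odd, q odd, 0 < q < p):                                   *)
(*   pi_1(S^3 - K(p,q)) = < a, b | w a = b w >,                        *)
(* with a = meridian and preferred longitude                           *)
(*   lambda = (w reversed) * w * a^{-2 sigma},  sigma = sum_i e_i.     *)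
(* (With this convention K(3,1) is the right-handed trefoil, whose      *)
(*  Seifert-fibre slope is +6.)                                        *)

Definition tb_eps (p q i : nat) : int := if odd (i * q %/ p) then -1 else 1.

Definition tb_sigma (p q : nat) : int := \sum_(1 <= i < p) tb_eps p q i.

Definition tb_letter (G : unitRingType) (a b : G) (i : nat) : G :=
  if odd i then a else b.

Definition tb_w (p q : nat) (G : unitRingType) (a b : G) : G :=
  \prod_(1 <= i < p) tb_letter a b i ^ tb_eps p q i.

Definition tb_wrev (p q : nat) (G : unitRingType) (a b : G) : G :=
  \prod_(1 <= i < p) tb_letter a b (p - i) ^ tb_eps p q (p - i).

Definition tb_longitude (p q : nat) (G : unitRingType) (a b : G) : G :=
  tb_wrev p q a b * tb_w p q a b * a ^ (- (2 * tb_sigma p q)).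

(* A homomorphism pi_1(S^3_r(K(p,q))) -> SL(2,R), r = m/n in lowest terms,
   is the same as a pair (A, B) of matrices of determinant 1 (the images of
   the generators a, b) satisfying the knot relation w a = b w and the
   surgery relation mu^m lambda^n = 1 with mu = a.  Its image is the
   subgroup generated by A and B, which is non-abelian iff A B <> B A. *)
Definition SL2R_rep_surgery (p q : nat) (r : rat) (A B : 'M[Rdefinitions.R]_2) : Prop :=
  [/\ \det A = 1, \det B = 1,
      tb_w p q A B * A = B * tb_w p q A B &
      A ^ (numq r) * tb_longitude p q A B ^ (denq r) = 1].

Definition nonabelian_SL2R_rep_surgery (p q : nat) (r : rat) : Prop :=
  exists A B : 'M[Rdefinitions.R]_2, SL2R_rep_surgery p q r A B /\ A * B != B * A.

(* Riley's representations a |-> [[M, 1], [0, M^-1]], b |-> [[M, 0], [y, M^-1]]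
   satisfy the relation of 6_2 exactly on the curve riley_poly M y = 0, and along
   it the longitude is upper triangular with diagonal (lambda^-1, lambda) and
   commutes with the image of a.  Writing z = tr(ab) = 2 + d, the curve is
   solved by y = (d^2 + d - 1) / (d (2 + d)^2 (1 + d)), and then t = M^-1 is the
   square root of a root in (0, 1) of a quadratic, so everything is an explicit
   function of d.  The surgery relation a^m lambda^n = 1 becomes
   phi(d) := (t^8 lambda)^n - t^(8n - m) = 0.  At d = 0 one finds phi = 1; at
   the golden point d = (sqrt 5 - 1) / 2 one has y = 0, lambda = 1 and
   phi = t^(8n) - t^(8n - m) < 0 because 0 < t < 1 and m > 0, so the
   intermediate value theorem gives a real point, where M^2 <> 1 makes the
   representation non-abelian. *)

From Stdlib Require Import Reals Ranalysis5 Lra.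
From Coquelicot Require Import Coquelicot.
From HB Require Import structures.
From mathcomp Require Import all_boot all_order all_algebra.
From mathcomp Require Import Rstruct.
From mathcomp Require Import zify ring lra.
Import Order.TTheory GRing.Theory Num.Theory.
Local Open Scope ring_scope.

(** * Two-by-two matrices *)

Section Mx2.
Context {R : comUnitRingType}.
Implicit Types a b c d : R.

Lemma ord2_cases (i : 'I_2) : i = 0 \/ i = 1.
Proof. by case: i => [[|[|k]] ?] //; [left | right]; apply: val_inj. Qed.

Ltac case_ord2 i j := case: (ord2_cases i) => ->; case: (ord2_cases j) => ->.

Definition mx2 a b c d : 'M[R]_2 :=
  \matrix_(i, j) if i == 0 then (if j == 0 then a else b)
                 else (if j == 0 then c else d).

Lemma mx2_eta (X : 'M[R]_2) : X = mx2 (X 0 0) (X 0 1) (X 1 0) (X 1 1).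
Proof. by apply/matrixP => i j; rewrite !mxE; case_ord2 i j. Qed.

Lemma mx2_entry01 a b c d : mx2 a b c d 0 1 = b.
Proof. by rewrite mxE. Qed.

Lemma mx2_congr a b c d a' b' c' d' :
  a = a' -> b = b' -> c = c' -> d = d' -> mx2 a b c d = mx2 a' b' c' d'.
Proof. by move=> -> -> -> ->. Qed.

Lemma mx2_mul a b c d a' b' c' d' :
  mx2 a b c d * mx2 a' b' c' d' =
  mx2 (a * a' + b * c') (a * b' + b * d') (c * a' + d * c') (c * b' + d * d').
Proof.
apply/matrixP => i j; rewrite !mxE !big_ord_recl big_ord0 !mxE addr0.
by case_ord2 i j.
Qed.

Lemma mx2_1 : mx2 1 0 0 1 = 1.
Proof. by apply/matrixP => i j; rewrite !mxE; case_ord2 i j. Qed.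

Lemma det_mx2 a b c d : \det (mx2 a b c d) = a * d - b * c.
Proof.
rewrite (expand_det_row _ 0) !big_ord_recl big_ord0 /cofactor !mxE /=.
by rewrite !det_mx11 !mxE /= expr0 expr1 addr0 mul1r mulN1r mulrN.
Qed.

Lemma mx2_inv a b c d : a * d - b * c = 1 -> (mx2 a b c d)^-1 = mx2 d (- b) (- c) a.
Proof.
move=> det1; have mulK : mx2 a b c d * mx2 d (- b) (- c) a = 1.
  by rewrite mx2_mul -mx2_1 -det1; congr mx2; ring.
have mulK' : mx2 d (- b) (- c) a * mx2 a b c d = 1.
  by rewrite mx2_mul -mx2_1 -det1; congr mx2; ring.
by rewrite -[LHS]mulr1 -mulK mulKr //; apply/unitrP; exists (mx2 d (- b) (- c) a).
Qed.

Lemma upper_mx2_expr a b d k : exists u, mx2 a b 0 d ^+ k = mx2 (a ^+ k) u 0 (d ^+ k).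
Proof.
elim: k => [|k [u IHk]]; first by exists 0; rewrite !expr0 mx2_1.
by exists (a * u + b * d ^+ k); rewrite exprS IHk mx2_mul !exprS; congr mx2; ring.
Qed.

End Mx2.

Section Word62.
Context {G : unitRingType}.
Implicit Types a b : G.

Lemma tb_sigma_6_2 : tb_sigma 11 3 = 2.
Proof. by rewrite /tb_sigma /index_iota /= !big_cons big_nil /tb_eps. Qed.

Lemma tb_w_6_2 a b :
  tb_w 11 3 a b = a * b * a * b^-1 * a^-1 * b^-1 * a^-1 * b * a * b.
Proof.
rewrite /tb_w /index_iota /= !big_cons big_nil /tb_letter /tb_eps /=.
by rewrite !expr1z !exprN1 !mulrA mulr1.
Qed.

Lemma tb_wrev_6_2 a b :
  tb_wrev 11 3 a b = b * a * b * a^-1 * b^-1 * a^-1 * b^-1 * a * b * a.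
Proof.
rewrite /tb_wrev /index_iota /= !big_cons big_nil /tb_letter /tb_eps /=.
by rewrite !expr1z !exprN1 !mulrA mulr1.
Qed.

Lemma tb_longitude_6_2 a b :
  tb_longitude 11 3 a b = tb_wrev 11 3 a b * tb_w 11 3 a b * a^-1 ^+ 4.
Proof. by rewrite /tb_longitude tb_sigma_6_2 -exprz_inv. Qed.

End Word62.

(** * The Riley representations of 6_2 *)

Section Riley.
Context {F : fieldType}.
Implicit Types M y z : F.

Definition riley_a M : 'M[F]_2 := mx2 M 1 0 M^-1.
Definition riley_b M y : 'M[F]_2 := mx2 M 0 y M^-1.

(* the trace of riley_a M * riley_b M y *)
Definition riley_z M y : F := M ^+ 2 + M^-1 ^+ 2 + y.

Definition riley_poly M y : F :=
  y * riley_z M y ^+ 2 * (riley_z M y - 1) * (riley_z M y - 2)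
  - (riley_z M y ^+ 2 - 3 * riley_z M y + 1).

(* Normal forms of the images of w, of its reverse and of the longitude; without
   these intermediate steps the entries of the longitude are too large for
   [field]. *)
Definition riley_word M y : 'M[F]_2 := mx2
  (M^-1 ^+ 6 * y ^+ 2 - 2 * M^-1 ^+ 4 * y ^+ 2 + 3 * M^-1 ^+ 4 * y ^+ 3
    - 2 * M^-1 ^+ 2 * y + 5 * M^-1 ^+ 2 * y ^+ 2 - 4 * M^-1 ^+ 2 * y ^+ 3
    + 3 * M^-1 ^+ 2 * y ^+ 4 + 3 * y - 8 * y ^+ 2 + 9 * y ^+ 3 - 2 * y ^+ 4
    + y ^+ 5 + M ^+ 2 - 4 * M ^+ 2 * y + 9 * M ^+ 2 * y ^+ 2
    - 6 * M ^+ 2 * y ^+ 3 + 4 * M ^+ 2 * y ^+ 4 + 3 * M ^+ 4 * y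
    - 6 * M ^+ 4 * y ^+ 2 + 6 * M ^+ 4 * y ^+ 3 - 2 * M ^+ 6 * y
    + 4 * M ^+ 6 * y ^+ 2 + M ^+ 8 * y)
  (M^-1 ^+ 7 * y - 2 * M^-1 ^+ 5 * y + 3 * M^-1 ^+ 5 * y ^+ 2 - M^-1 ^+ 3
    + 4 * M^-1 ^+ 3 * y - 4 * M^-1 ^+ 3 * y ^+ 2 + 3 * M^-1 ^+ 3 * y ^+ 3
    + 2 * M^-1 - 5 * M^-1 * y + 7 * M^-1 * y ^+ 2 - 2 * M^-1 * y ^+ 3
    + M^-1 * y ^+ 4 - M + 5 * M * y - 4 * M * y ^+ 2 + 3 * M * y ^+ 3 + M ^+ 3
    - 2 * M ^+ 3 * y + 3 * M ^+ 3 * y ^+ 2 + M ^+ 5 * y)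
  (M^-1 ^+ 7 * y ^+ 2 - 2 * M^-1 ^+ 5 * y ^+ 2 + 3 * M^-1 ^+ 5 * y ^+ 3
    - M^-1 ^+ 3 * y + 4 * M^-1 ^+ 3 * y ^+ 2 - 4 * M^-1 ^+ 3 * y ^+ 3
    + 3 * M^-1 ^+ 3 * y ^+ 4 + 2 * M^-1 * y - 5 * M^-1 * y ^+ 2
    + 7 * M^-1 * y ^+ 3 - 2 * M^-1 * y ^+ 4 + M^-1 * y ^+ 5 - M * y
    + 5 * M * y ^+ 2 - 4 * M * y ^+ 3 + 3 * M * y ^+ 4 + M ^+ 3 * y
    - 2 * M ^+ 3 * y ^+ 2 + 3 * M ^+ 3 * y ^+ 3 + M ^+ 5 * y ^+ 2)
  (M^-1 ^+ 8 * y - 2 * M^-1 ^+ 6 * y + 3 * M^-1 ^+ 6 * y ^+ 2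
    + 3 * M^-1 ^+ 4 * y - 4 * M^-1 ^+ 4 * y ^+ 2 + 3 * M^-1 ^+ 4 * y ^+ 3
    + M^-1 ^+ 2 - 2 * M^-1 ^+ 2 * y + 5 * M^-1 ^+ 2 * y ^+ 2
    - 2 * M^-1 ^+ 2 * y ^+ 3 + M^-1 ^+ 2 * y ^+ 4 + 2 * y - 2 * y ^+ 2
    + 2 * y ^+ 3 + M ^+ 2 * y ^+ 2).

Definition riley_word_rev M y : 'M[F]_2 := mx2
  (M^-1 ^+ 2 * y ^+ 2 + 2 * y - 2 * y ^+ 2 + 2 * y ^+ 3 + M ^+ 2
    - 2 * M ^+ 2 * y + 5 * M ^+ 2 * y ^+ 2 - 2 * M ^+ 2 * y ^+ 3
    + M ^+ 2 * y ^+ 4 + 3 * M ^+ 4 * y - 4 * M ^+ 4 * y ^+ 2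
    + 3 * M ^+ 4 * y ^+ 3 - 2 * M ^+ 6 * y + 3 * M ^+ 6 * y ^+ 2 + M ^+ 8 * y)
  (M^-1 ^+ 5 * y + M^-1 ^+ 3 - 2 * M^-1 ^+ 3 * y + 3 * M^-1 ^+ 3 * y ^+ 2
    - M^-1 + 5 * M^-1 * y - 4 * M^-1 * y ^+ 2 + 3 * M^-1 * y ^+ 3 + 2 * M
    - 5 * M * y + 7 * M * y ^+ 2 - 2 * M * y ^+ 3 + M * y ^+ 4 - M ^+ 3
    + 4 * M ^+ 3 * y - 4 * M ^+ 3 * y ^+ 2 + 3 * M ^+ 3 * y ^+ 3
    - 2 * M ^+ 5 * y + 3 * M ^+ 5 * y ^+ 2 + M ^+ 7 * y)
  (M^-1 ^+ 5 * y ^+ 2 + M^-1 ^+ 3 * y - 2 * M^-1 ^+ 3 * y ^+ 2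
    + 3 * M^-1 ^+ 3 * y ^+ 3 - M^-1 * y + 5 * M^-1 * y ^+ 2
    - 4 * M^-1 * y ^+ 3 + 3 * M^-1 * y ^+ 4 + 2 * M * y - 5 * M * y ^+ 2
    + 7 * M * y ^+ 3 - 2 * M * y ^+ 4 + M * y ^+ 5 - M ^+ 3 * y
    + 4 * M ^+ 3 * y ^+ 2 - 4 * M ^+ 3 * y ^+ 3 + 3 * M ^+ 3 * y ^+ 4
    - 2 * M ^+ 5 * y ^+ 2 + 3 * M ^+ 5 * y ^+ 3 + M ^+ 7 * y ^+ 2)
  (M^-1 ^+ 8 * y - 2 * M^-1 ^+ 6 * y + 4 * M^-1 ^+ 6 * y ^+ 2
    + 3 * M^-1 ^+ 4 * y - 6 * M^-1 ^+ 4 * y ^+ 2 + 6 * M^-1 ^+ 4 * y ^+ 3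
    + M^-1 ^+ 2 - 4 * M^-1 ^+ 2 * y + 9 * M^-1 ^+ 2 * y ^+ 2
    - 6 * M^-1 ^+ 2 * y ^+ 3 + 4 * M^-1 ^+ 2 * y ^+ 4 + 3 * y - 8 * y ^+ 2
    + 9 * y ^+ 3 - 2 * y ^+ 4 + y ^+ 5 - 2 * M ^+ 2 * y + 5 * M ^+ 2 * y ^+ 2
    - 4 * M ^+ 2 * y ^+ 3 + 3 * M ^+ 2 * y ^+ 4 - 2 * M ^+ 4 * y ^+ 2
    + 3 * M ^+ 4 * y ^+ 3 + M ^+ 6 * y ^+ 2).

Definition riley_lambda M y : F :=
  - M^-1 ^+ 18 * y ^+ 3 + 3 * M^-1 ^+ 16 * y ^+ 3 - 7 * M^-1 ^+ 16 * y ^+ 4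
  + M^-1 ^+ 14 * y ^+ 2 - 8 * M^-1 ^+ 14 * y ^+ 3 + 16 * M^-1 ^+ 14 * y ^+ 4
  - 21 * M^-1 ^+ 14 * y ^+ 5 - 3 * M^-1 ^+ 12 * y ^+ 2
  + 18 * M^-1 ^+ 12 * y ^+ 3 - 41 * M^-1 ^+ 12 * y ^+ 4
  + 33 * M^-1 ^+ 12 * y ^+ 5 - 35 * M^-1 ^+ 12 * y ^+ 6
  + 2 * M^-1 ^+ 10 * y ^+ 2 - 24 * M^-1 ^+ 10 * y ^+ 3
  + 60 * M^-1 ^+ 10 * y ^+ 4 - 87 * M^-1 ^+ 10 * y ^+ 5
  + 30 * M^-1 ^+ 10 * y ^+ 6 - 35 * M^-1 ^+ 10 * y ^+ 7 + M^-1 ^+ 8 * y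
  + M^-1 ^+ 8 * y ^+ 2 + 6 * M^-1 ^+ 8 * y ^+ 3 - 51 * M^-1 ^+ 8 * y ^+ 4
  + 70 * M^-1 ^+ 8 * y ^+ 5 - 100 * M^-1 ^+ 8 * y ^+ 6
  + 5 * M^-1 ^+ 8 * y ^+ 7 - 21 * M^-1 ^+ 8 * y ^+ 8 + M^-1 ^+ 6 * y
  - 12 * M^-1 ^+ 6 * y ^+ 2 + 30 * M^-1 ^+ 6 * y ^+ 3
  - 29 * M^-1 ^+ 6 * y ^+ 4 - 32 * M^-1 ^+ 6 * y ^+ 5 + 3 * M^-1 ^+ 6 * y ^+ 6
  - 70 * M^-1 ^+ 6 * y ^+ 7 - 12 * M^-1 ^+ 6 * y ^+ 8 - 7 * M^-1 ^+ 6 * y ^+ 9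
  - 5 * M^-1 ^+ 4 * y + 32 * M^-1 ^+ 4 * y ^+ 2 - 96 * M^-1 ^+ 4 * y ^+ 3
  + 133 * M^-1 ^+ 4 * y ^+ 4 - 131 * M^-1 ^+ 4 * y ^+ 5
  + 8 * M^-1 ^+ 4 * y ^+ 6 - 62 * M^-1 ^+ 4 * y ^+ 7 - 33 * M^-1 ^+ 4 * y ^+ 8
  - 9 * M^-1 ^+ 4 * y ^+ 9 - M^-1 ^+ 4 * y ^+ 10 + 4 * M^-1 ^+ 2 * y
  - 42 * M^-1 ^+ 2 * y ^+ 2 + 133 * M^-1 ^+ 2 * y ^+ 3
  - 239 * M^-1 ^+ 2 * y ^+ 4 + 219 * M^-1 ^+ 2 * y ^+ 5
  - 197 * M^-1 ^+ 2 * y ^+ 6 + 2 * M^-1 ^+ 2 * y ^+ 7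
  - 54 * M^-1 ^+ 2 * y ^+ 8 - 11 * M^-1 ^+ 2 * y ^+ 9
  - 2 * M^-1 ^+ 2 * y ^+ 10 + 1 - 7 * y + 33 * y ^+ 2 - 120 * y ^+ 3
  + 220 * y ^+ 4 - 274 * y ^+ 5 + 136 * y ^+ 6 - 143 * y ^+ 7 - 17 * y ^+ 8
  - 18 * y ^+ 9 - 2 * y ^+ 10 - M ^+ 2 * y - 6 * M ^+ 2 * y ^+ 2
  + 41 * M ^+ 2 * y ^+ 3 - 116 * M ^+ 2 * y ^+ 4 + 129 * M ^+ 2 * y ^+ 5
  - 154 * M ^+ 2 * y ^+ 6 - 4 * M ^+ 2 * y ^+ 7 - 52 * M ^+ 2 * y ^+ 8
  - 10 * M ^+ 2 * y ^+ 9 - 2 * M ^+ 2 * y ^+ 10 + 4 * M ^+ 4 * y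
  - 23 * M ^+ 4 * y ^+ 2 + 44 * M ^+ 4 * y ^+ 3 - 49 * M ^+ 4 * y ^+ 4
  + 11 * M ^+ 4 * y ^+ 5 - 48 * M ^+ 4 * y ^+ 6 - 42 * M ^+ 4 * y ^+ 7
  - 32 * M ^+ 4 * y ^+ 8 - 8 * M ^+ 4 * y ^+ 9 - M ^+ 4 * y ^+ 10
  - 6 * M ^+ 6 * y + 37 * M ^+ 6 * y ^+ 2 - 101 * M ^+ 6 * y ^+ 3
  + 146 * M ^+ 6 * y ^+ 4 - 154 * M ^+ 6 * y ^+ 5 + 64 * M ^+ 6 * y ^+ 6
  - 80 * M ^+ 6 * y ^+ 7 - 6 * M ^+ 6 * y ^+ 8 - 7 * M ^+ 6 * y ^+ 9
  + 4 * M ^+ 8 * y - 32 * M ^+ 8 * y ^+ 2 + 97 * M ^+ 8 * y ^+ 3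
  - 162 * M ^+ 8 * y ^+ 4 + 154 * M ^+ 8 * y ^+ 5 - 130 * M ^+ 8 * y ^+ 6
  + 20 * M ^+ 8 * y ^+ 7 - 21 * M ^+ 8 * y ^+ 8 - M ^+ 10 * y
  + 18 * M ^+ 10 * y ^+ 2 - 67 * M ^+ 10 * y ^+ 3 + 116 * M ^+ 10 * y ^+ 4
  - 122 * M ^+ 10 * y ^+ 5 + 50 * M ^+ 10 * y ^+ 6 - 35 * M ^+ 10 * y ^+ 7
  - 8 * M ^+ 12 * y ^+ 2 + 34 * M ^+ 12 * y ^+ 3 - 60 * M ^+ 12 * y ^+ 4
  + 48 * M ^+ 12 * y ^+ 5 - 35 * M ^+ 12 * y ^+ 6 + 2 * M ^+ 14 * y ^+ 2
  - 12 * M ^+ 14 * y ^+ 3 + 22 * M ^+ 14 * y ^+ 4 - 21 * M ^+ 14 * y ^+ 5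
  + 4 * M ^+ 16 * y ^+ 3 - 7 * M ^+ 16 * y ^+ 4 - M ^+ 18 * y ^+ 3.

Definition riley_longitude M y : 'M[F]_2 := mx2
  (M^-1 ^+ 16 * y ^+ 3 + M^-1 ^+ 14 * y ^+ 2 - 4 * M^-1 ^+ 14 * y ^+ 3
    + 6 * M^-1 ^+ 14 * y ^+ 4 - 4 * M^-1 ^+ 12 * y ^+ 2
    + 16 * M^-1 ^+ 12 * y ^+ 3 - 19 * M^-1 ^+ 12 * y ^+ 4
    + 15 * M^-1 ^+ 12 * y ^+ 5 - M^-1 ^+ 10 * y + 12 * M^-1 ^+ 10 * y ^+ 2
    - 36 * M^-1 ^+ 10 * y ^+ 3 + 56 * M^-1 ^+ 10 * y ^+ 4
    - 35 * M^-1 ^+ 10 * y ^+ 5 + 20 * M^-1 ^+ 10 * y ^+ 6 + 3 * M^-1 ^+ 8 * y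
    - 23 * M^-1 ^+ 8 * y ^+ 2 + 68 * M^-1 ^+ 8 * y ^+ 3
    - 90 * M^-1 ^+ 8 * y ^+ 4 + 84 * M^-1 ^+ 8 * y ^+ 5
    - 30 * M^-1 ^+ 8 * y ^+ 6 + 15 * M^-1 ^+ 8 * y ^+ 7 - 5 * M^-1 ^+ 6 * y
    + 32 * M^-1 ^+ 6 * y ^+ 2 - 80 * M^-1 ^+ 6 * y ^+ 3
    + 121 * M^-1 ^+ 6 * y ^+ 4 - 87 * M^-1 ^+ 6 * y ^+ 5
    + 61 * M^-1 ^+ 6 * y ^+ 6 - 10 * M^-1 ^+ 6 * y ^+ 7
    + 6 * M^-1 ^+ 6 * y ^+ 8 + 5 * M^-1 ^+ 4 * y - 26 * M^-1 ^+ 4 * y ^+ 2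
    + 68 * M^-1 ^+ 4 * y ^+ 3 - 77 * M^-1 ^+ 4 * y ^+ 4
    + 77 * M^-1 ^+ 4 * y ^+ 5 - 21 * M^-1 ^+ 4 * y ^+ 6
    + 20 * M^-1 ^+ 4 * y ^+ 7 + M^-1 ^+ 4 * y ^+ 8 + M^-1 ^+ 4 * y ^+ 9
    + 8 * M^-1 ^+ 2 * y ^+ 2 - 8 * M^-1 ^+ 2 * y ^+ 3
    + 11 * M^-1 ^+ 2 * y ^+ 4 + 20 * M^-1 ^+ 2 * y ^+ 5
    + 3 * M^-1 ^+ 2 * y ^+ 6 + 15 * M^-1 ^+ 2 * y ^+ 7
    + 2 * M^-1 ^+ 2 * y ^+ 8 + M^-1 ^+ 2 * y ^+ 9 + 1 - 3 * y + 17 * y ^+ 2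
    - 44 * y ^+ 3 + 88 * y ^+ 4 - 68 * y ^+ 5 + 60 * y ^+ 6 - 9 * y ^+ 7
    + 7 * y ^+ 8 + 5 * M ^+ 2 * y - 28 * M ^+ 2 * y ^+ 2
    + 84 * M ^+ 2 * y ^+ 3 - 112 * M ^+ 2 * y ^+ 4 + 110 * M ^+ 2 * y ^+ 5
    - 40 * M ^+ 2 * y ^+ 6 + 21 * M ^+ 2 * y ^+ 7 - 4 * M ^+ 4 * y
    + 29 * M ^+ 4 * y ^+ 2 - 72 * M ^+ 4 * y ^+ 3 + 105 * M ^+ 4 * y ^+ 4
    - 65 * M ^+ 4 * y ^+ 5 + 35 * M ^+ 4 * y ^+ 6 + 2 * M ^+ 6 * y
    - 17 * M ^+ 6 * y ^+ 2 + 51 * M ^+ 6 * y ^+ 3 - 54 * M ^+ 6 * y ^+ 4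
    + 35 * M ^+ 6 * y ^+ 5 + 10 * M ^+ 8 * y ^+ 2 - 23 * M ^+ 8 * y ^+ 3
    + 21 * M ^+ 8 * y ^+ 4 - 4 * M ^+ 10 * y ^+ 2 + 7 * M ^+ 10 * y ^+ 3
    + M ^+ 12 * y ^+ 2)
  (- M^-1 ^+ 15 * y ^+ 3 - M^-1 ^+ 13 * y ^+ 2 + 3 * M^-1 ^+ 13 * y ^+ 3
    - 6 * M^-1 ^+ 13 * y ^+ 4 + 3 * M^-1 ^+ 11 * y ^+ 2
    - 13 * M^-1 ^+ 11 * y ^+ 3 + 13 * M^-1 ^+ 11 * y ^+ 4
    - 15 * M^-1 ^+ 11 * y ^+ 5 + M^-1 ^+ 9 * y - 8 * M^-1 ^+ 9 * y ^+ 2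
    + 23 * M^-1 ^+ 9 * y ^+ 3 - 43 * M^-1 ^+ 9 * y ^+ 4
    + 20 * M^-1 ^+ 9 * y ^+ 5 - 20 * M^-1 ^+ 9 * y ^+ 6 - M^-1 ^+ 7 * y
    + 10 * M^-1 ^+ 7 * y ^+ 2 - 38 * M^-1 ^+ 7 * y ^+ 3
    + 47 * M^-1 ^+ 7 * y ^+ 4 - 64 * M^-1 ^+ 7 * y ^+ 5
    + 10 * M^-1 ^+ 7 * y ^+ 6 - 15 * M^-1 ^+ 7 * y ^+ 7
    - 2 * M^-1 ^+ 5 * y ^+ 2 + 13 * M^-1 ^+ 5 * y ^+ 3
    - 53 * M^-1 ^+ 5 * y ^+ 4 + 23 * M^-1 ^+ 5 * y ^+ 5
    - 51 * M^-1 ^+ 5 * y ^+ 6 - 5 * M^-1 ^+ 5 * y ^+ 7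
    - 6 * M^-1 ^+ 5 * y ^+ 8 + 6 * M^-1 ^+ 3 * y - 23 * M^-1 ^+ 3 * y ^+ 2
    + 31 * M^-1 ^+ 3 * y ^+ 3 - 45 * M^-1 ^+ 3 * y ^+ 4
    - 19 * M^-1 ^+ 3 * y ^+ 5 - 30 * M^-1 ^+ 3 * y ^+ 6
    - 25 * M^-1 ^+ 3 * y ^+ 7 - 7 * M^-1 ^+ 3 * y ^+ 8 - M^-1 ^+ 3 * y ^+ 9
    + M^-1 - 14 * M^-1 * y + 55 * M^-1 * y ^+ 2 - 117 * M^-1 * y ^+ 3
    + 109 * M^-1 * y ^+ 4 - 124 * M^-1 * y ^+ 5 + 2 * M^-1 * y ^+ 6
    - 40 * M^-1 * y ^+ 7 - 9 * M^-1 * y ^+ 8 - 2 * M^-1 * y ^+ 9 - 2 * M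
    + 16 * M * y - 70 * M * y ^+ 2 + 142 * M * y ^+ 3 - 206 * M * y ^+ 4
    + 109 * M * y ^+ 5 - 113 * M * y ^+ 6 - 10 * M * y ^+ 7 - 16 * M * y ^+ 8
    - 2 * M * y ^+ 9 - 11 * M ^+ 3 * y + 50 * M ^+ 3 * y ^+ 2
    - 124 * M ^+ 3 * y ^+ 3 + 130 * M ^+ 3 * y ^+ 4 - 149 * M ^+ 3 * y ^+ 5
    + 13 * M ^+ 3 * y ^+ 6 - 46 * M ^+ 3 * y ^+ 7 - 9 * M ^+ 3 * y ^+ 8
    - 2 * M ^+ 3 * y ^+ 9 - 2 * M ^+ 5 * y - 5 * M ^+ 5 * y ^+ 2
    + 16 * M ^+ 5 * y ^+ 3 - 52 * M ^+ 5 * y ^+ 4 - 7 * M ^+ 5 * y ^+ 5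
    - 43 * M ^+ 5 * y ^+ 6 - 26 * M ^+ 5 * y ^+ 7 - 8 * M ^+ 5 * y ^+ 8
    - M ^+ 5 * y ^+ 9 - 2 * M ^+ 7 + 13 * M ^+ 7 * y - 40 * M ^+ 7 * y ^+ 2
    + 59 * M ^+ 7 * y ^+ 3 - 90 * M ^+ 7 * y ^+ 4 + 39 * M ^+ 7 * y ^+ 5
    - 65 * M ^+ 7 * y ^+ 6 - 6 * M ^+ 7 * y ^+ 7 - 7 * M ^+ 7 * y ^+ 8
    + M ^+ 9 - 14 * M ^+ 9 * y + 52 * M ^+ 9 * y ^+ 2 - 109 * M ^+ 9 * y ^+ 3
    + 114 * M ^+ 9 * y ^+ 4 - 110 * M ^+ 9 * y ^+ 5 + 20 * M ^+ 9 * y ^+ 6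
    - 21 * M ^+ 9 * y ^+ 7 + 10 * M ^+ 11 * y - 46 * M ^+ 11 * y ^+ 2
    + 88 * M ^+ 11 * y ^+ 3 - 107 * M ^+ 11 * y ^+ 4 + 50 * M ^+ 11 * y ^+ 5
    - 35 * M ^+ 11 * y ^+ 6 - 5 * M ^+ 13 * y + 25 * M ^+ 13 * y ^+ 2
    - 54 * M ^+ 13 * y ^+ 3 + 48 * M ^+ 13 * y ^+ 4 - 35 * M ^+ 13 * y ^+ 5
    + M ^+ 15 * y - 11 * M ^+ 15 * y ^+ 2 + 22 * M ^+ 15 * y ^+ 3
    - 21 * M ^+ 15 * y ^+ 4 + 4 * M ^+ 17 * y ^+ 2 - 7 * M ^+ 17 * y ^+ 3
    - M ^+ 19 * y ^+ 2)
  (M^-1 ^+ 19 * y ^+ 3 - 4 * M^-1 ^+ 17 * y ^+ 3 + 7 * M^-1 ^+ 17 * y ^+ 4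
    - M^-1 ^+ 15 * y ^+ 2 + 11 * M^-1 ^+ 15 * y ^+ 3
    - 23 * M^-1 ^+ 15 * y ^+ 4 + 21 * M^-1 ^+ 15 * y ^+ 5
    + 5 * M^-1 ^+ 13 * y ^+ 2 - 26 * M^-1 ^+ 13 * y ^+ 3
    + 57 * M^-1 ^+ 13 * y ^+ 4 - 54 * M^-1 ^+ 13 * y ^+ 5
    + 35 * M^-1 ^+ 13 * y ^+ 6 - 10 * M^-1 ^+ 11 * y ^+ 2
    + 50 * M^-1 ^+ 11 * y ^+ 3 - 101 * M^-1 ^+ 11 * y ^+ 4
    + 120 * M^-1 ^+ 11 * y ^+ 5 - 65 * M^-1 ^+ 11 * y ^+ 6
    + 35 * M^-1 ^+ 11 * y ^+ 7 - M^-1 ^+ 9 * y + 15 * M^-1 ^+ 9 * y ^+ 2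
    - 64 * M^-1 ^+ 9 * y ^+ 3 + 139 * M^-1 ^+ 9 * y ^+ 4
    - 157 * M^-1 ^+ 9 * y ^+ 5 + 130 * M^-1 ^+ 9 * y ^+ 6
    - 40 * M^-1 ^+ 9 * y ^+ 7 + 21 * M^-1 ^+ 9 * y ^+ 8 + 2 * M^-1 ^+ 7 * y
    - 15 * M^-1 ^+ 7 * y ^+ 2 + 61 * M^-1 ^+ 7 * y ^+ 3
    - 120 * M^-1 ^+ 7 * y ^+ 4 + 158 * M^-1 ^+ 7 * y ^+ 5
    - 103 * M^-1 ^+ 7 * y ^+ 6 + 75 * M^-1 ^+ 7 * y ^+ 7
    - 9 * M^-1 ^+ 7 * y ^+ 8 + 7 * M^-1 ^+ 7 * y ^+ 9 + 7 * M^-1 ^+ 5 * y ^+ 2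
    - 23 * M^-1 ^+ 5 * y ^+ 3 + 54 * M^-1 ^+ 5 * y ^+ 4
    - 55 * M^-1 ^+ 5 * y ^+ 5 + 65 * M^-1 ^+ 5 * y ^+ 6
    - 8 * M^-1 ^+ 5 * y ^+ 7 + 21 * M^-1 ^+ 5 * y ^+ 8
    + 2 * M^-1 ^+ 5 * y ^+ 9 + M^-1 ^+ 5 * y ^+ 10 + 7 * M^-1 ^+ 3 * y ^+ 2
    - 23 * M^-1 ^+ 3 * y ^+ 3 + 54 * M^-1 ^+ 3 * y ^+ 4
    - 55 * M^-1 ^+ 3 * y ^+ 5 + 65 * M^-1 ^+ 3 * y ^+ 6
    - 8 * M^-1 ^+ 3 * y ^+ 7 + 21 * M^-1 ^+ 3 * y ^+ 8
    + 2 * M^-1 ^+ 3 * y ^+ 9 + M^-1 ^+ 3 * y ^+ 10 + 2 * M^-1 * y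
    - 15 * M^-1 * y ^+ 2 + 61 * M^-1 * y ^+ 3 - 120 * M^-1 * y ^+ 4
    + 158 * M^-1 * y ^+ 5 - 103 * M^-1 * y ^+ 6 + 75 * M^-1 * y ^+ 7
    - 9 * M^-1 * y ^+ 8 + 7 * M^-1 * y ^+ 9 - M * y + 15 * M * y ^+ 2
    - 64 * M * y ^+ 3 + 139 * M * y ^+ 4 - 157 * M * y ^+ 5 + 130 * M * y ^+ 6
    - 40 * M * y ^+ 7 + 21 * M * y ^+ 8 - 10 * M ^+ 3 * y ^+ 2
    + 50 * M ^+ 3 * y ^+ 3 - 101 * M ^+ 3 * y ^+ 4 + 120 * M ^+ 3 * y ^+ 5
    - 65 * M ^+ 3 * y ^+ 6 + 35 * M ^+ 3 * y ^+ 7 + 5 * M ^+ 5 * y ^+ 2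
    - 26 * M ^+ 5 * y ^+ 3 + 57 * M ^+ 5 * y ^+ 4 - 54 * M ^+ 5 * y ^+ 5
    + 35 * M ^+ 5 * y ^+ 6 - M ^+ 7 * y ^+ 2 + 11 * M ^+ 7 * y ^+ 3
    - 23 * M ^+ 7 * y ^+ 4 + 21 * M ^+ 7 * y ^+ 5 - 4 * M ^+ 9 * y ^+ 3
    + 7 * M ^+ 9 * y ^+ 4 + M ^+ 11 * y ^+ 3)
  (riley_lambda M y).

Definition lambda_a z : F :=
  - 1 + 6 * z - 13 * z ^+ 2 + 15 * z ^+ 3 - 7 * z ^+ 4 - 7 * z ^+ 5
  + 12 * z ^+ 6 - 6 * z ^+ 7 + z ^+ 8.
Definition lambda_b z : F :=
  - 1 + 8 * z - 24 * z ^+ 2 + 38 * z ^+ 3 - 38 * z ^+ 4 + 12 * z ^+ 5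
  + 24 * z ^+ 6 - 38 * z ^+ 7 + 25 * z ^+ 8 - 8 * z ^+ 9 + z ^+ 10.

(* Multipliers of riley_poly in identities that hold on the Riley curve.
   Coefficients above 1000 are split because nat literals are unary and large
   ones overflow the stack. *)
Definition longitude_lower_cert M y : F :=
  M^-1 ^+ 11 * y ^+ 2 - M^-1 ^+ 9 * y ^+ 2 + 3 * M^-1 ^+ 9 * y ^+ 3
  + 2 * M^-1 ^+ 7 * y ^+ 2 - M^-1 ^+ 7 * y ^+ 3 + 3 * M^-1 ^+ 7 * y ^+ 4
  + M^-1 ^+ 5 * y + 3 * M^-1 ^+ 5 * y ^+ 3 + M^-1 ^+ 5 * y ^+ 4
  + M^-1 ^+ 5 * y ^+ 5 + M^-1 ^+ 3 * y + 3 * M^-1 ^+ 3 * y ^+ 3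
  + M^-1 ^+ 3 * y ^+ 4 + M^-1 ^+ 3 * y ^+ 5 + 2 * M^-1 * y ^+ 2
  - M^-1 * y ^+ 3 + 3 * M^-1 * y ^+ 4 - M * y ^+ 2 + 3 * M * y ^+ 3
  + M ^+ 3 * y ^+ 2.
Definition longitude_comm_cert M y : F :=
  - M^-1 ^+ 10 * y ^+ 2 - 3 * M^-1 ^+ 8 * y ^+ 3 - 2 * M^-1 ^+ 6 * y ^+ 2
  - 2 * M^-1 ^+ 6 * y ^+ 3 - 3 * M^-1 ^+ 6 * y ^+ 4 - 2 * M^-1 ^+ 4 * y ^+ 2
  - 5 * M^-1 ^+ 4 * y ^+ 3 - 4 * M^-1 ^+ 4 * y ^+ 4 - M^-1 ^+ 4 * y ^+ 5
  - 4 * M^-1 ^+ 2 * y + 2 * M^-1 ^+ 2 * y ^+ 2 - 8 * M^-1 ^+ 2 * y ^+ 3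
  - 5 * M^-1 ^+ 2 * y ^+ 4 - 2 * M^-1 ^+ 2 * y ^+ 5 + y - 8 * y ^+ 2 - y ^+ 3
  - 8 * y ^+ 4 - 2 * y ^+ 5 + M ^+ 2 - 4 * M ^+ 2 * y + 3 * M ^+ 2 * y ^+ 2
  - 10 * M ^+ 2 * y ^+ 3 - 4 * M ^+ 2 * y ^+ 4 - 2 * M ^+ 2 * y ^+ 5
  - M ^+ 4 * y - 2 * M ^+ 4 * y ^+ 2 - 5 * M ^+ 4 * y ^+ 3
  - 4 * M ^+ 4 * y ^+ 4 - M ^+ 4 * y ^+ 5 - M ^+ 6 + 2 * M ^+ 6 * y
  - 6 * M ^+ 6 * y ^+ 2 - 4 * M ^+ 6 * y ^+ 4 - 3 * M ^+ 8 * y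
  + 4 * M ^+ 8 * y ^+ 2 - 6 * M ^+ 8 * y ^+ 3 + 2 * M ^+ 10 * y
  - 4 * M ^+ 10 * y ^+ 2 - M ^+ 12 * y.
Definition lambda_cert M y : F :=
  - M^-1 ^+ 28 * y ^+ 2 + 6 * M^-1 ^+ 26 * y ^+ 2 - 12 * M^-1 ^+ 26 * y ^+ 3
  - 23 * M^-1 ^+ 24 * y ^+ 2 + 64 * M^-1 ^+ 24 * y ^+ 3
  - 66 * M^-1 ^+ 24 * y ^+ 4 + 66 * M^-1 ^+ 22 * y ^+ 2
  - 230 * M^-1 ^+ 22 * y ^+ 3 + 308 * M^-1 ^+ 22 * y ^+ 4
  - 220 * M^-1 ^+ 22 * y ^+ 5 - 3 * M^-1 ^+ 20 * y - 148 * M^-1 ^+ 20 * y ^+ 2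
  + 610 * M^-1 ^+ 20 * y ^+ 3 - (1 * 1000 + 37) * M^-1 ^+ 20 * y ^+ 4
  + 880 * M^-1 ^+ 20 * y ^+ 5 - 495 * M^-1 ^+ 20 * y ^+ 6 + M^-1 ^+ 18
  + 17 * M^-1 ^+ 18 * y + 242 * M^-1 ^+ 18 * y ^+ 2
  - (1 * 1000 + 260) * M^-1 ^+ 18 * y ^+ 3
  + (2 * 1000 + 506) * M^-1 ^+ 18 * y ^+ 4
  - (2 * 1000 + 780) * M^-1 ^+ 18 * y ^+ 5
  + (1 * 1000 + 650) * M^-1 ^+ 18 * y ^+ 6 - 792 * M^-1 ^+ 18 * y ^+ 7
  - 5 * M^-1 ^+ 16 - 48 * M^-1 ^+ 16 * y - 257 * M^-1 ^+ 16 * y ^+ 2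
  + (1 * 1000 + 974) * M^-1 ^+ 16 * y ^+ 3
  - (4 * 1000 + 718) * M^-1 ^+ 16 * y ^+ 4
  + (5 * 1000 + 992) * M^-1 ^+ 16 * y ^+ 5
  - (4 * 1000 + 920) * M^-1 ^+ 16 * y ^+ 6
  + (2 * 1000 + 112) * M^-1 ^+ 16 * y ^+ 7 - 924 * M^-1 ^+ 16 * y ^+ 8
  + 15 * M^-1 ^+ 14 + 107 * M^-1 ^+ 14 * y + 48 * M^-1 ^+ 14 * y ^+ 2
  - (2 * 1000 + 200) * M^-1 ^+ 14 * y ^+ 3
  + (6 * 1000 + 670) * M^-1 ^+ 14 * y ^+ 4
  - (10 * 1000 + 155) * M^-1 ^+ 14 * y ^+ 5
  + (9 * 1000 + 138) * M^-1 ^+ 14 * y ^+ 6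
  - (6 * 1000 + 36) * M^-1 ^+ 14 * y ^+ 7
  + (1 * 1000 + 848) * M^-1 ^+ 14 * y ^+ 8 - 792 * M^-1 ^+ 14 * y ^+ 9
  - 34 * M^-1 ^+ 12 - 189 * M^-1 ^+ 12 * y + 580 * M^-1 ^+ 12 * y ^+ 2
  + (1 * 1000 + 100) * M^-1 ^+ 12 * y ^+ 3
  - (6 * 1000 + 518) * M^-1 ^+ 12 * y ^+ 4
  + (12 * 1000 + 303) * M^-1 ^+ 12 * y ^+ 5
  - (13 * 1000 + 753) * M^-1 ^+ 12 * y ^+ 6
  + (9 * 1000 + 84) * M^-1 ^+ 12 * y ^+ 7
  - (5 * 1000 + 250) * M^-1 ^+ 12 * y ^+ 8
  + (1 * 1000 + 56) * M^-1 ^+ 12 * y ^+ 9 - 495 * M^-1 ^+ 12 * y ^+ 10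
  + 59 * M^-1 ^+ 10 + 280 * M^-1 ^+ 10 * y
  - (1 * 1000 + 663) * M^-1 ^+ 10 * y ^+ 2
  + (2 * 1000 + 93) * M^-1 ^+ 10 * y ^+ 3
  + (1 * 1000 + 997) * M^-1 ^+ 10 * y ^+ 4
  - (9 * 1000 + 210) * M^-1 ^+ 10 * y ^+ 5
  + (12 * 1000 + 956) * M^-1 ^+ 10 * y ^+ 6
  - (12 * 1000 + 20) * M^-1 ^+ 10 * y ^+ 7
  + (5 * 1000 + 628) * M^-1 ^+ 10 * y ^+ 8
  - (3 * 1000 + 264) * M^-1 ^+ 10 * y ^+ 9 + 330 * M^-1 ^+ 10 * y ^+ 10
  - 220 * M^-1 ^+ 10 * y ^+ 11 - 84 * M^-1 ^+ 8 - 373 * M^-1 ^+ 8 * y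
  + (3 * 1000 + 81) * M^-1 ^+ 8 * y ^+ 2
  - (7 * 1000 + 229) * M^-1 ^+ 8 * y ^+ 3
  + (7 * 1000 + 812) * M^-1 ^+ 8 * y ^+ 4
  - (2 * 1000 + 328) * M^-1 ^+ 8 * y ^+ 5
  - (4 * 1000 + 954) * M^-1 ^+ 8 * y ^+ 6
  + (6 * 1000 + 524) * M^-1 ^+ 8 * y ^+ 7
  - (6 * 1000 + 664) * M^-1 ^+ 8 * y ^+ 8
  + (1 * 1000 + 704) * M^-1 ^+ 8 * y ^+ 9
  - (1 * 1000 + 455) * M^-1 ^+ 8 * y ^+ 10 - 66 * M^-1 ^+ 8 * y ^+ 12
  + 100 * M^-1 ^+ 6 + 428 * M^-1 ^+ 6 * y
  - (4 * 1000 + 444) * M^-1 ^+ 6 * y ^+ 2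
  + (13 * 1000 + 179) * M^-1 ^+ 6 * y ^+ 3
  - (20 * 1000 + 978) * M^-1 ^+ 6 * y ^+ 4
  + (20 * 1000 + 558) * M^-1 ^+ 6 * y ^+ 5
  - (12 * 1000 + 944) * M^-1 ^+ 6 * y ^+ 6
  + (3 * 1000 + 248) * M^-1 ^+ 6 * y ^+ 7
  - (1 * 1000 + 116) * M^-1 ^+ 6 * y ^+ 8
  - (2 * 1000 + 234) * M^-1 ^+ 6 * y ^+ 9 - 258 * M^-1 ^+ 6 * y ^+ 10
  - 470 * M^-1 ^+ 6 * y ^+ 11 - 44 * M^-1 ^+ 6 * y ^+ 12
  - 12 * M^-1 ^+ 6 * y ^+ 13 - 101 * M^-1 ^+ 4 - 425 * M^-1 ^+ 4 * y
  + (5 * 1000 + 182) * M^-1 ^+ 4 * y ^+ 2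
  - (17 * 1000 + 628) * M^-1 ^+ 4 * y ^+ 3
  + (32 * 1000 + 931) * M^-1 ^+ 4 * y ^+ 4
  - (39 * 1000 + 658) * M^-1 ^+ 4 * y ^+ 5
  + (32 * 1000 + 632) * M^-1 ^+ 4 * y ^+ 6
  - (20 * 1000 + 480) * M^-1 ^+ 4 * y ^+ 7
  + (6 * 1000 + 828) * M^-1 ^+ 4 * y ^+ 8
  - (3 * 1000 + 965) * M^-1 ^+ 4 * y ^+ 9 - 490 * M^-1 ^+ 4 * y ^+ 10
  - 462 * M^-1 ^+ 4 * y ^+ 11 - 113 * M^-1 ^+ 4 * y ^+ 12
  - 16 * M^-1 ^+ 4 * y ^+ 13 - M^-1 ^+ 4 * y ^+ 14 + 89 * M^-1 ^+ 2
  + 322 * M^-1 ^+ 2 * y - (4 * 1000 + 855) * M^-1 ^+ 2 * y ^+ 2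
  + (18 * 1000 + 391) * M^-1 ^+ 2 * y ^+ 3
  - (37 * 1000 + 851) * M^-1 ^+ 2 * y ^+ 4
  + (50 * 1000 + 371) * M^-1 ^+ 2 * y ^+ 5
  - (47 * 1000 + 134) * M^-1 ^+ 2 * y ^+ 6
  + (30 * 1000 + 594) * M^-1 ^+ 2 * y ^+ 7
  - (17 * 1000 + 325) * M^-1 ^+ 2 * y ^+ 8
  + (4 * 1000 + 237) * M^-1 ^+ 2 * y ^+ 9
  - (2 * 1000 + 702) * M^-1 ^+ 2 * y ^+ 10 - 168 * M^-1 ^+ 2 * y ^+ 11
  - 182 * M^-1 ^+ 2 * y ^+ 12 - 20 * M^-1 ^+ 2 * y ^+ 13
  - 2 * M^-1 ^+ 2 * y ^+ 14 - 69 - 113 * y + (3 * 1000 + 270) * y ^+ 2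
  - (14 * 1000 + 330) * y ^+ 3 + (32 * 1000 + 446) * y ^+ 4
  - (46 * 1000 + 496) * y ^+ 5 + (45 * 1000 + 685) * y ^+ 6
  - (33 * 1000 + 898) * y ^+ 7 + (15 * 1000 + 883) * y ^+ 8
  - (8 * 1000 + 568) * y ^+ 9 + 915 * y ^+ 10 - 946 * y ^+ 11 - 82 * y ^+ 12
  - 32 * y ^+ 13 - 2 * y ^+ 14 + 45 * M ^+ 2 - 164 * M ^+ 2 * y
  - 815 * M ^+ 2 * y ^+ 2 + (6 * 1000 + 343) * M ^+ 2 * y ^+ 3
  - (17 * 1000 + 506) * M ^+ 2 * y ^+ 4 + (27 * 1000 + 916) * M ^+ 2 * y ^+ 5
  - (29 * 1000 + 843) * M ^+ 2 * y ^+ 6 + (21 * 1000 + 101) * M ^+ 2 * y ^+ 7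
  - (13 * 1000 + 469) * M ^+ 2 * y ^+ 8 + (3 * 1000 + 207) * M ^+ 2 * y ^+ 9
  - (2 * 1000 + 464) * M ^+ 2 * y ^+ 10 - 176 * M ^+ 2 * y ^+ 11
  - 178 * M ^+ 2 * y ^+ 12 - 19 * M ^+ 2 * y ^+ 13 - 2 * M ^+ 2 * y ^+ 14
  - 24 * M ^+ 4 + 434 * M ^+ 4 * y - (1 * 1000 + 848) * M ^+ 4 * y ^+ 2
  + (3 * 1000 + 47) * M ^+ 4 * y ^+ 3 - (1 * 1000 + 568) * M ^+ 4 * y ^+ 4
  - (2 * 1000 + 83) * M ^+ 4 * y ^+ 5 + (4 * 1000 + 183) * M ^+ 4 * y ^+ 6
  - (4 * 1000 + 904) * M ^+ 4 * y ^+ 7 + 819 * M ^+ 4 * y ^+ 8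
  - (2 * 1000 + 153) * M ^+ 4 * y ^+ 9 - 772 * M ^+ 4 * y ^+ 10
  - 396 * M ^+ 4 * y ^+ 11 - 110 * M ^+ 4 * y ^+ 12 - 15 * M ^+ 4 * y ^+ 13
  - M ^+ 4 * y ^+ 14 + 8 * M ^+ 6 - 626 * M ^+ 6 * y
  + (3 * 1000 + 889) * M ^+ 6 * y ^+ 2 - (10 * 1000 + 798) * M ^+ 6 * y ^+ 3
  + (18 * 1000 + 144) * M ^+ 6 * y ^+ 4 - (21 * 1000 + 105) * M ^+ 6 * y ^+ 5
  + (17 * 1000 + 973) * M ^+ 6 * y ^+ 6 - (13 * 1000 + 33) * M ^+ 6 * y ^+ 7
  + (5 * 1000 + 312) * M ^+ 6 * y ^+ 8 - (3 * 1000 + 879) * M ^+ 6 * y ^+ 9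
  + 157 * M ^+ 6 * y ^+ 10 - 495 * M ^+ 6 * y ^+ 11 - 33 * M ^+ 6 * y ^+ 12
  - 12 * M ^+ 6 * y ^+ 13 + M ^+ 8 + 685 * M ^+ 8 * y
  - (4 * 1000 + 860) * M ^+ 8 * y ^+ 2 + (14 * 1000 + 876) * M ^+ 8 * y ^+ 3
  - (27 * 1000 + 213) * M ^+ 8 * y ^+ 4 + (33 * 1000 + 818) * M ^+ 8 * y ^+ 5
  - (30 * 1000 + 729) * M ^+ 8 * y ^+ 6 + (19 * 1000 + 852) * M ^+ 8 * y ^+ 7
  - (11 * 1000 + 424) * M ^+ 8 * y ^+ 8 + (3 * 1000 + 129) * M ^+ 8 * y ^+ 9
  - (1 * 1000 + 650) * M ^+ 8 * y ^+ 10 + 55 * M ^+ 8 * y ^+ 11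
  - 66 * M ^+ 8 * y ^+ 12 - 3 * M ^+ 10 - 626 * M ^+ 10 * y
  + (4 * 1000 + 691) * M ^+ 10 * y ^+ 2 - (14 * 1000 + 907) * M ^+ 10 * y ^+ 3
  + (27 * 1000 + 857) * M ^+ 10 * y ^+ 4
  - (34 * 1000 + 755) * M ^+ 10 * y ^+ 5
  + (30 * 1000 + 476) * M ^+ 10 * y ^+ 6
  - (20 * 1000 + 364) * M ^+ 10 * y ^+ 7 + (8 * 1000 + 688) * M ^+ 10 * y ^+ 8
  - (3 * 1000 + 894) * M ^+ 10 * y ^+ 9 + 495 * M ^+ 10 * y ^+ 10
  - 220 * M ^+ 10 * y ^+ 11 + 2 * M ^+ 12 + 478 * M ^+ 12 * y
  - (3 * 1000 + 753) * M ^+ 12 * y ^+ 2 + (12 * 1000 + 106) * M ^+ 12 * y ^+ 3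
  - (22 * 1000 + 478) * M ^+ 12 * y ^+ 4
  + (27 * 1000 + 286) * M ^+ 12 * y ^+ 5
  - (23 * 1000 + 253) * M ^+ 12 * y ^+ 6
  + (13 * 1000 + 452) * M ^+ 12 * y ^+ 7 - (6 * 1000 + 468) * M ^+ 12 * y ^+ 8
  + (1 * 1000 + 386) * M ^+ 12 * y ^+ 9 - 495 * M ^+ 12 * y ^+ 10 - M ^+ 14
  - 312 * M ^+ 14 * y + (2 * 1000 + 545) * M ^+ 14 * y ^+ 2
  - (8 * 1000 + 219) * M ^+ 14 * y ^+ 3 + (14 * 1000 + 902) * M ^+ 14 * y ^+ 4
  - (17 * 1000 + 302) * M ^+ 14 * y ^+ 5
  + (13 * 1000 + 380) * M ^+ 14 * y ^+ 6 - (7 * 1000 + 590) * M ^+ 14 * y ^+ 7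
  + (2 * 1000 + 310) * M ^+ 14 * y ^+ 8 - 792 * M ^+ 14 * y ^+ 9
  + 170 * M ^+ 16 * y - (1 * 1000 + 470) * M ^+ 16 * y ^+ 2
  + (4 * 1000 + 718) * M ^+ 16 * y ^+ 3 - (8 * 1000 + 198) * M ^+ 16 * y ^+ 4
  + (8 * 1000 + 782) * M ^+ 16 * y ^+ 5 - (6 * 1000 + 270) * M ^+ 16 * y ^+ 6
  + (2 * 1000 + 574) * M ^+ 16 * y ^+ 7 - 924 * M ^+ 16 * y ^+ 8
  - 76 * M ^+ 18 * y + 724 * M ^+ 18 * y ^+ 2
  - (2 * 1000 + 284) * M ^+ 18 * y ^+ 3 + (3 * 1000 + 706) * M ^+ 18 * y ^+ 4
  - (3 * 1000 + 575) * M ^+ 18 * y ^+ 5 + (1 * 1000 + 980) * M ^+ 18 * y ^+ 6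
  - 792 * M ^+ 18 * y ^+ 7 + 27 * M ^+ 20 * y - 302 * M ^+ 20 * y ^+ 2
  + 920 * M ^+ 20 * y ^+ 3 - (1 * 1000 + 342) * M ^+ 20 * y ^+ 4
  + (1 * 1000 + 45) * M ^+ 20 * y ^+ 5 - 495 * M ^+ 20 * y ^+ 6
  - 7 * M ^+ 22 * y + 105 * M ^+ 22 * y ^+ 2 - 299 * M ^+ 22 * y ^+ 3
  + 363 * M ^+ 22 * y ^+ 4 - 220 * M ^+ 22 * y ^+ 5 + M ^+ 24 * y
  - 30 * M ^+ 24 * y ^+ 2 + 75 * M ^+ 24 * y ^+ 3 - 66 * M ^+ 24 * y ^+ 4
  + 7 * M ^+ 26 * y ^+ 2 - 12 * M ^+ 26 * y ^+ 3 - M ^+ 28 * y ^+ 2.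

Lemma riley_a_inv M : M != 0 -> (riley_a M)^-1 = mx2 M^-1 (-1) 0 M.
Proof. by move=> M0; rewrite mx2_inv ?oppr0 // mulfV // mulr0 subr0. Qed.

Lemma riley_b_inv M y : M != 0 -> (riley_b M y)^-1 = mx2 M^-1 0 (- y) M.
Proof. by move=> M0; rewrite mx2_inv ?oppr0 // mulfV // mul0r subr0. Qed.

Lemma det_riley_a M : M != 0 -> \det (riley_a M) = 1.
Proof. by move=> M0; rewrite det_mx2 mulfV // mulr0 subr0. Qed.

Lemma det_riley_b M y : M != 0 -> \det (riley_b M y) = 1.
Proof. by move=> M0; rewrite det_mx2 mulfV // mul0r subr0. Qed.

Lemma tb_w_riley M y : M != 0 -> tb_w 11 3 (riley_a M) (riley_b M y) = riley_word M y.
Proof.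
move=> M0; rewrite tb_w_6_2 riley_a_inv // riley_b_inv // /riley_a /riley_b !mx2_mul.
by apply: mx2_congr; field.
Qed.

Lemma tb_wrev_riley M y : M != 0 ->
  tb_wrev 11 3 (riley_a M) (riley_b M y) = riley_word_rev M y.
Proof.
move=> M0; rewrite tb_wrev_6_2 riley_a_inv // riley_b_inv // /riley_a /riley_b !mx2_mul.
by apply: mx2_congr; field.
Qed.

Lemma tb_longitude_riley M y : M != 0 ->
  tb_longitude 11 3 (riley_a M) (riley_b M y) = riley_longitude M y.
Proof.
move=> M0; rewrite tb_longitude_6_2 tb_wrev_riley // tb_w_riley // riley_a_inv //.
rewrite [riley_word_rev M y]mx2_eta [riley_word M y]mx2_eta !exprS expr0 mulr1 !mx2_mul.
rewrite [riley_longitude M y]mx2_eta.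
apply: mx2_congr;
  rewrite /riley_word_rev /riley_word /riley_longitude /riley_lambda !mxE /=; by field.
Qed.

Lemma riley_knot_relation M y : M != 0 -> riley_poly M y = 0 ->
  tb_w 11 3 (riley_a M) (riley_b M y) * riley_a M
  = riley_b M y * tb_w 11 3 (riley_a M) (riley_b M y).
Proof.
move=> M0 P0; rewrite tb_w_riley // [riley_word M y]mx2_eta /riley_a /riley_b !mx2_mul.
apply: mx2_congr; apply: subr0_eq; rewrite /riley_word !mxE /=.
- by field.
- by rewrite -[RHS]P0 /riley_poly /riley_z; field.
- transitivity (- y * riley_poly M y); last by rewrite P0 mulr0.
  by rewrite /riley_poly /riley_z; field.
- by field.
Qed.

Lemma riley_longitude_lower M y : M != 0 -> riley_poly M y = 0 ->
  riley_longitude M y 1 0 = 0.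
Proof.
move=> M0 P0.
transitivity (longitude_lower_cert M y * riley_poly M y); last by rewrite P0 mulr0.
by rewrite /riley_longitude mxE /= /longitude_lower_cert /riley_poly /riley_z; field.
Qed.

Lemma riley_longitude_comm M y : M != 0 -> riley_poly M y = 0 ->
  GRing.comm (riley_a M) (riley_longitude M y).
Proof.
move=> M0 P0; have L10 := riley_longitude_lower M y M0 P0.
rewrite /GRing.comm [riley_longitude M y]mx2_eta L10 /riley_a !mx2_mul.
apply: mx2_congr; rewrite ?mulr0 ?mul0r ?addr0 ?add0r ?mulr1 ?mul1r //;
  [exact: mulrC | | exact: mulrC].
apply: subr0_eq.
transitivity (longitude_comm_cert M y * riley_poly M y); last by rewrite P0 mulr0.
rewrite /riley_longitude /riley_lambda !mxE /= /longitude_comm_cert /riley_poly /riley_z.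
by field.
Qed.

Lemma det_riley_longitude M y : M != 0 -> \det (riley_longitude M y) = 1.
Proof.
move=> M0; rewrite -tb_longitude_riley // tb_longitude_6_2 tb_wrev_6_2 tb_w_6_2.
by rewrite !exprS expr0 mulr1 !detM !detV det_riley_a // det_riley_b // invr1 !mulr1.
Qed.

Lemma riley_longitude_upper M y : M != 0 -> riley_poly M y = 0 ->
  exists u, riley_longitude M y = mx2 (riley_lambda M y)^-1 u 0 (riley_lambda M y).
Proof.
move=> M0 P0; set L := riley_longitude M y.
have L10 : L 1 0 = 0 := riley_longitude_lower M y M0 P0.
have L11 : L 1 1 = riley_lambda M y by rewrite /L mxE.
have L00 : (riley_lambda M y)^-1 = L 0 0.
  apply: mulr1_eq; rewrite mulrC -L11.
  have := det_riley_longitude M y M0.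
  by rewrite -/L {1}[L]mx2_eta det_mx2 L10 mulr0 subr0.
by exists (L 0 1); rewrite {1}[L]mx2_eta L10 L11 L00.
Qed.

Lemma riley_lambda_z M y : M != 0 -> riley_poly M y = 0 ->
  riley_lambda M y * riley_z M y ^+ 6 * (riley_z M y - 2) ^+ 3
  = lambda_a (riley_z M y) * riley_z M y ^+ 2 * (riley_z M y - 2)
    - lambda_b (riley_z M y) * M ^+ 2.
Proof.
move=> M0 P0; apply: subr0_eq.
transitivity (lambda_cert M y * riley_poly M y); last by rewrite P0 mulr0.
rewrite /riley_lambda /lambda_a /lambda_b /lambda_cert /riley_poly /riley_z.
by field.
Qed.

Lemma riley_lambda_y0 M : M != 0 -> riley_lambda M 0 = 1.
Proof. by move=> M0; rewrite /riley_lambda; field. Qed.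

Lemma riley_noncomm M y : M != 0 -> M ^+ 2 != 1 ->
  riley_a M * riley_b M y != riley_b M y * riley_a M.
Proof.
move=> M0 M2; apply: contra M2 => /eqP /(congr1 (fun X : 'M[F]_2 => X 0 1)).
rewrite /riley_a /riley_b !mx2_mul !mx2_entry01 mulr0 add0r mulr1 mul0r addr0 mul1r => E.
by rewrite expr2 -{1}E mulVf.
Qed.

Lemma unipotent_comm_riley_a M u : M != 0 -> M ^+ 2 != 1 ->
  GRing.comm (riley_a M) (mx2 1 u 0 1) -> mx2 1 u 0 1 = 1.
Proof.
move=> M0 M2 /(congr1 (fun X : 'M[F]_2 => X 0 1)).
rewrite /riley_a !mx2_mul !mx2_entry01 => E.
have : u * (M ^+ 2 - 1) = (M * u + 1 * 1 - (1 * 1 + u * M^-1)) * M by field.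
rewrite E subrr mul0r => /eqP; rewrite mulf_eq0 subr_eq0 (negbTE M2) orbF => /eqP->.
exact: mx2_1.
Qed.

Lemma riley_surgery_relation M y (m n : nat) :
  M != 0 -> M ^+ 2 != 1 -> riley_poly M y = 0 ->
  M^-1 ^+ m * riley_lambda M y ^+ n = 1 ->
  riley_a M ^+ m * tb_longitude 11 3 (riley_a M) (riley_b M y) ^+ n = 1.
Proof.
move=> M0 M2 P0 mn1; rewrite tb_longitude_riley //.
have commAX : GRing.comm (riley_a M) (riley_a M ^+ m * riley_longitude M y ^+ n).
  by apply: commrM; apply: commrX; [exact: commr_refl | exact: riley_longitude_comm].
have [c Xc] : exists c, riley_a M ^+ m * riley_longitude M y ^+ n = mx2 1 c 0 1.
  have [u ->] := riley_longitude_upper M y M0 P0.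
  have [u1 ->] := upper_mx2_expr M 1 M^-1 m.
  have [u2 ->] := upper_mx2_expr (riley_lambda M y)^-1 u (riley_lambda M y) n.
  have mn1' : M ^+ m * (riley_lambda M y)^-1 ^+ n = 1.
    by rewrite -[LHS]invrK invfM exprVn invrK -exprVn mn1 invr1.
  rewrite mx2_mul !mulr0 !mul0r addr0 mn1 !add0r mn1'.
  by exists (M ^+ m * u2 + u1 * riley_lambda M y ^+ n).
by rewrite Xc in commAX *; exact: unipotent_comm_riley_a commAX.
Qed.

End Riley.

(** * A real curve of Riley representations *)

(* [RealsE] turns Stdlib numerals into [(nat_of_pos p)%:R], which [ring] and
   [field] cannot evaluate. *)
Ltac realsE := rewrite ?RealsE; simpl nat_of_pos.

Section Parametrization.
Local Open Scope R_scope.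
Implicit Types d : R.

(* With z = 2 + d, riley_poly M y = 0 reads y = y62 d, and then
   M^2 + M^-2 = p62 d / (d * q62 d); s62 d = M^-2 is the root of this in (0, 1).
   It is written as d * sig62 d so that g62, which is s62 ^ 4 * riley_lambda
   for d > 0 (g62_lambda), extends continuously to d = 0. *)
Definition q62 d := (2 + d) ^ 2 * (1 + d).
Definition n62 d := d ^ 2 + d - 1.
Definition p62 d := (2 + d) * d * q62 d - n62 d.
Definition disc62 d := p62 d ^ 2 - 4 * d ^ 2 * q62 d ^ 2.
Definition sig62 d := 2 * q62 d / (p62 d + sqrt (disc62 d)).
Definition s62 d := d * sig62 d.
Definition t62 d := sqrt (s62 d).
Definition y62 d := n62 d / (d * q62 d).
Definition g62 d := sig62 d ^ 4 * d ^ 2 * lambda_a (2 + d) / (2 + d) ^ 4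
                    - sig62 d ^ 3 * lambda_b (2 + d) / (2 + d) ^ 6.
Definition phi62 (n k : nat) d := g62 d ^ n - t62 d ^ k.

Lemma disc62_factor_pos d : 0 <= d -> n62 d <= 0 ->
  [/\ 0 < q62 d, 0 < p62 d - 2 * d * q62 d & 0 < p62 d + 2 * d * q62 d].
Proof.
move=> d0 Nd; have q0 : 0 < q62 d by rewrite /q62; Lra.nra.
have dq0 : 0 <= d * q62 d by apply: Rmult_le_pos; Lra.lra.
have gap : 0 < d * (d * q62 d) - n62 d.
  case: d0 => [d0 | <-]; last by rewrite /n62; Lra.lra.
  by have := Rmult_lt_0_compat _ _ d0 (Rmult_lt_0_compat _ _ d0 q0); Lra.lra.
have -> : p62 d - 2 * d * q62 d = d * (d * q62 d) - n62 d by rewrite /p62; realsE; ring.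
by split=> //; rewrite /p62; Lra.nra.
Qed.

Lemma disc62_pos d : 0 <= d -> n62 d <= 0 -> 0 < disc62 d.
Proof.
move=> d0 Nd; have [_ lo hi] := disc62_factor_pos d d0 Nd.
have -> : disc62 d = (p62 d - 2 * d * q62 d) * (p62 d + 2 * d * q62 d).
  by rewrite /disc62; realsE; ring.
exact: Rmult_lt_0_compat.
Qed.

Lemma sig62_den_pos d : 0 <= d -> n62 d <= 0 -> 0 < p62 d + sqrt (disc62 d).
Proof.
move=> d0 Nd; have [q0 lo _] := disc62_factor_pos d d0 Nd.
have dq0 : 0 <= d * q62 d by apply: Rmult_le_pos; Lra.lra.
have := sqrt_pos (disc62 d); Lra.lra.
Qed.

Lemma ex_derive_lambda_a z : ex_derive (@lambda_a R) z.
Proof.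
apply: (ex_derive_ext (fun z => - 1 + 6 * z - 13 * z ^ 2 + 15 * z ^ 3 - 7 * z ^ 4
  - 7 * z ^ 5 + 12 * z ^ 6 - 6 * z ^ 7 + z ^ 8)); last by auto_derive.
by move=> t; rewrite /lambda_a; realsE.
Qed.

Lemma ex_derive_lambda_b z : ex_derive (@lambda_b R) z.
Proof.
apply: (ex_derive_ext (fun z => - 1 + 8 * z - 24 * z ^ 2 + 38 * z ^ 3 - 38 * z ^ 4
  + 12 * z ^ 5 + 24 * z ^ 6 - 38 * z ^ 7 + 25 * z ^ 8 - 8 * z ^ 9 + z ^ 10));
  last by auto_derive.
by move=> t; rewrite /lambda_b; realsE.
Qed.

Lemma ex_derive_disc62 d : [/\ ex_derive q62 d, ex_derive p62 d & ex_derive disc62 d].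
Proof.
have ex_q x : ex_derive q62 x by rewrite /q62; auto_derive.
have ex_p x : ex_derive p62 x by rewrite /p62 /n62; auto_derive.
by split=> //; rewrite /disc62; auto_derive.
Qed.

Lemma g62_derivable d : 0 <= d -> n62 d <= 0 -> ex_derive g62 d.
Proof.
move=> d0 Nd; have [ex_q ex_p ex_disc] := ex_derive_disc62 d.
have disc0 := disc62_pos d d0 Nd; have den0 := sig62_den_pos d d0 Nd.
have ex_z : ex_derive (+%R (2 : R)) d by change (ex_derive (Rplus 2) d); auto_derive.
rewrite /g62 /sig62; auto_derive.
repeat split=> //; try exact: ex_derive_lambda_a; try exact: ex_derive_lambda_b;
  apply: Rgt_not_eq => //; repeat apply: Rmult_lt_0_compat; Lra.lra.
Qed.

Lemma s62_derivable d : 0 <= d -> n62 d <= 0 -> ex_derive s62 d.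
Proof.
move=> d0 Nd; have [ex_q ex_p ex_disc] := ex_derive_disc62 d.
have disc0 := disc62_pos d d0 Nd; have den0 := sig62_den_pos d d0 Nd.
rewrite /s62 /sig62; auto_derive.
by repeat split=> //; apply: Rgt_not_eq.
Qed.

(* s62 vanishes at d = 0, where its square root is not derivable. *)
Lemma phi62_continuous n k d : 0 <= d -> n62 d <= 0 -> continuity_pt (phi62 n k) d.
Proof.
move=> d0 Nd; apply/continuity_pt_filterlim/continuous_minus.
- apply: (continuous_comp g62 (fun x => x ^ n)).
    exact/ex_derive_continuous/g62_derivable.
  by apply: ex_derive_continuous; auto_derive.
- apply: (continuous_comp t62 (fun x => x ^ k)).
    exact/continuous_sqrt_comp/ex_derive_continuous/s62_derivable.
  by apply: ex_derive_continuous; auto_derive.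
Qed.

Lemma g62_0 : g62 0 = 1.
Proof.
have disc1 : disc62 0 = 1 by rewrite /disc62 /p62 /q62 /n62; realsE; ring.
rewrite /g62 /sig62 disc1 sqrt_1 /p62 /q62 /n62 /lambda_a /lambda_b; realsE.
by field.
Qed.

Lemma phi62_0 n k : (0 < k)%N -> phi62 n k 0 = 1.
Proof.
move=> /ssrnat.ltP k0.
by rewrite /phi62 g62_0 pow1 /t62 /s62 Rmult_0_l sqrt_0 pow_i // Rminus_0_r.
Qed.

Definition golden := (sqrt 5 - 1) / 2.

Lemma golden_pos_root : 0 < golden /\ n62 golden = 0.
Proof.
have s5 : sqrt 5 * sqrt 5 = 5 by apply: sqrt_sqrt; Lra.lra.
have := sqrt_pos 5; rewrite /golden /n62; split; Lra.nra.
Qed.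

Lemma n62_nonpos d : 0 <= d -> d <= golden -> n62 d <= 0.
Proof.
have s5 : sqrt 5 * sqrt 5 = 5 by apply: sqrt_sqrt; Lra.lra.
have := sqrt_pos 5; rewrite /golden /n62; Lra.nra.
Qed.

Lemma s62_root d : 0 < d -> n62 d <= 0 ->
  d * q62 d * s62 d ^ 2 - p62 d * s62 d + d * q62 d = 0.
Proof.
move=> d0 Nd; have r2 : sqrt (disc62 d) * sqrt (disc62 d) = disc62 d.
  exact/sqrt_sqrt/Rlt_le/disc62_pos/Nd/Rlt_le.
have /Rgt_not_eq/eqP den := sig62_den_pos d (Rlt_le _ _ d0) Nd.
rewrite /s62 /sig62; move: den r2; set r := sqrt _ => den r2.
transitivity (d * q62 d / (p62 d + r) ^ 2 * (r * r - disc62 d)).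
  by rewrite /disc62; realsE; field.
by rewrite r2 Rminus_diag Rmult_0_r.
Qed.

Lemma s62_bounds d : 0 < d -> n62 d <= 0 -> 0 < s62 d < 1.
Proof.
move=> d0 Nd; have [q0 lo _] := disc62_factor_pos d (Rlt_le _ _ d0) Nd.
have dq0 : 0 < d * q62 d by apply: Rmult_lt_0_compat.
have r0 := sqrt_pos (disc62 d); have den := sig62_den_pos d (Rlt_le _ _ d0) Nd.
rewrite /s62 /sig62; move: r0 den; set r := sqrt _ => r0 den.
have -> : d * (2 * q62 d / (p62 d + r)) = 2 * (d * q62 d) / (p62 d + r).
  by realsE; field; apply/eqP/Rgt_not_eq.
split; first by apply: Rdiv_lt_0_compat; Lra.lra.
have : 0 < (p62 d + r - 2 * (d * q62 d)) / (p62 d + r) by apply: Rdiv_lt_0_compat; Lra.lra.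
have -> : (p62 d + r - 2 * (d * q62 d)) / (p62 d + r) = 1 - 2 * (d * q62 d) / (p62 d + r).
  by realsE; field; apply/eqP/Rgt_not_eq.
Lra.lra.
Qed.

Lemma t62_bounds d : 0 < d -> n62 d <= 0 -> 0 < t62 d < 1 /\ t62 d ^ 2 = s62 d.
Proof.
move=> d0 Nd; have [s0 s1] := s62_bounds d d0 Nd.
split; last by rewrite /t62 /= Rmult_1_r sqrt_sqrt //; Lra.lra.
split; first exact: sqrt_lt_R0.
by rewrite /t62 -sqrt_1; apply: sqrt_lt_1; Lra.lra.
Qed.

Lemma riley_z62 d : 0 < d -> n62 d <= 0 -> riley_z (t62 d)^-1 (y62 d) = 2 + d.
Proof.
move=> d0 Nd; have [[t0 _] t2] := t62_bounds d d0 Nd.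
have [q0 _ _] := disc62_factor_pos d (Rlt_le _ _ d0) Nd.
have s0 : s62 d != 0 by rewrite -t2; apply/eqP/pow_nonzero/Rgt_not_eq.
have q0' : q62 d != 0 by apply/eqP/Rgt_not_eq.
have d0' : d != 0 by apply/eqP/Rgt_not_eq.
rewrite RpowE in t2; rewrite /riley_z /y62 invrK exprVn t2.
transitivity ((d * q62 d * s62 d ^ 2 - p62 d * s62 d + d * q62 d) / (d * q62 d * s62 d)
              + (2 + d)).
  by rewrite /p62; realsE; field; rewrite s0 q0' d0'.
by rewrite s62_root // Rdiv_0_l Rplus_0_l.
Qed.

Lemma riley_poly62 d : 0 < d -> n62 d <= 0 -> riley_poly (t62 d)^-1 (y62 d) = 0.
Proof.
move=> d0 Nd; rewrite /riley_poly riley_z62 // /y62 /q62 /n62; realsE.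
by field; move/RltP: d0; rewrite R0E => d0; rewrite !lt0r_neq0 //; lra.
Qed.

Lemma g62_lambda d : 0 < d -> n62 d <= 0 ->
  g62 d = t62 d ^ 8 * riley_lambda (t62 d)^-1 (y62 d).
Proof.
move=> d0 Nd; have [[t0 _] t2] := t62_bounds d d0 Nd.
have t0' : t62 d != 0 by apply/eqP/Rgt_not_eq.
have lamE := riley_lambda_z (t62 d)^-1 (y62 d) (invr_neq0 t0') (riley_poly62 d d0 Nd).
rewrite riley_z62 // in lamE.
have sigE : sig62 d = t62 d ^ 2 / d.
  by rewrite t2 /s62; realsE; field; apply/eqP/Rgt_not_eq.
move/RltP: d0; rewrite R0E => d0.
rewrite /g62 sigE; realsE; set lam := riley_lambda _ _ in lamE *.
have -> : lam = (lam * (2 + d) ^+ 6 * (2 + d - 2) ^+ 3 / ((2 + d) ^+ 6 * d ^+ 3))%R.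
  by field; rewrite !lt0r_neq0 //; lra.
rewrite lamE; realsE; field.
by rewrite t0' !lt0r_neq0 //; lra.
Qed.

Lemma phi62_golden_neg n k : (k < 8 * n)%N -> phi62 n k golden < 0.
Proof.
move=> kn; have [g0 Ng] := golden_pos_root.
have [[t0 t1] _] := t62_bounds golden g0 (Req_le _ _ Ng).
have y0 : y62 golden = 0 by rewrite /y62 Ng Rdiv_0_l.
rewrite /phi62 g62_lambda //; last exact: Req_le.
rewrite y0 riley_lambda_y0 ?Rmult_1_r; last exact/invr_neq0/eqP/Rgt_not_eq.
rewrite -pow_mult; apply/Rlt_minus/RltP; rewrite !RpowE ltr_iXn2l //; exact/RltP.
Qed.

Lemma phi62_root n k : (0 < k)%N -> (k < 8 * n)%N ->
  exists c, 0 < c /\ n62 c <= 0 /\ phi62 n k c = 0.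
Proof.
move=> k0 kn; have [g0 _] := golden_pos_root.
have cont a : 0 <= a <= golden -> continuity_pt (fun x => - phi62 n k x) a.
  by case=> a0 a1; apply/continuity_pt_opp/phi62_continuous/n62_nonpos.
have at0 : - phi62 n k 0 < 0 by rewrite phi62_0 //; Lra.lra.
have atg : 0 < - phi62 n k golden by have := phi62_golden_neg n k kn; Lra.lra.
have [c [[c0 cg] phic]] := IVT_interv _ 0 golden cont g0 at0 atg.
have c0' : 0 < c by case: c0 => // c0; rewrite -c0 phi62_0 // in phic; Lra.lra.
exists c; split=> //; split; first exact: n62_nonpos.
Lra.lra.
Qed.

Lemma riley_surgery62 (m n : nat) d : 0 < d -> n62 d <= 0 -> (m <= 8 * n)%N ->
  phi62 n (8 * n - m) d = 0 -> t62 d ^ m * riley_lambda (t62 d)^-1 (y62 d) ^ n = 1.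
Proof.
move=> d0 Nd mn; have [[t0 _] _] := t62_bounds d d0 Nd.
have t0' : t62 d != 0 by apply/eqP/Rgt_not_eq.
rewrite /phi62 g62_lambda // => /Rminus_diag_uniq; rewrite !RpowE => E.
apply: (mulfI (expf_neq0 (8 * n - m) t0')).
by rewrite mulr1 mulrA -exprD subnK // exprM -exprMn E.
Qed.

End Parametrization.

Lemma numq_denq_bounds (r : rat) : 0 < r -> r < 8 -> exists m n : nat,
  [/\ numq r = m, denq r = n, (0 < m)%N, (0 < n)%N & (m < 8 * n)%N].
Proof.
move=> r0 r8; have num0 : 0 < numq r by rewrite numq_gt0.
have r8' : (numq r)%:Q < 8 * (denq r)%:Q by rewrite -ltr_pdivrMr ?ltr0z // divq_num_den.
case: (numq r) num0 r8' => [m|//] m0; case: (denq r) (denq_gt0 r) => [n|//] n0 mn.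
by exists m, n; split=> //; move: mn; rewrite -!pmulrn -natrM ltr_nat; lia.
Qed.

Theorem mainTheorem12 (r : rat) :
  0 < r -> r < 8 -> nonabelian_SL2R_rep_surgery 11 3 r.
Proof.
move=> r0 r8; have [m [n [num den m0 n0 mn]]] := numq_denq_bounds r r0 r8.
have [c [c0 [Nc root]]] := phi62_root n (8 * n - m) ltac:(lia) ltac:(lia).
have [[/RltP t0 /RltP t1] _] := t62_bounds c c0 Nc.
have M0 : (t62 c)^-1 != 0 by rewrite invr_eq0 gt_eqF.
have M2 : (t62 c)^-1 ^+ 2 != 1 by rewrite exprVn invr_eq1 lt_eqF // expr_lt1 // ltW.
exists (riley_a (t62 c)^-1), (riley_b (t62 c)^-1 (y62 c)).
have P0 := riley_poly62 c c0 Nc.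
split; last exact: riley_noncomm.
split; [exact: det_riley_a | exact: det_riley_b | exact: riley_knot_relation |].
rewrite num den -!exprnP; apply: riley_surgery_relation => //.
by rewrite invrK -!RpowE; apply: riley_surgery62 => //; lia.
Qed.
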